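(* Let $2<\alpha<4$ and $0<N_1\le N_2$. Consider the two-player Random Access Game in which player $i\in\{1,2\}$ chooses $\Lambda_i\in[0,N_i]$ and receives payoff \[ U_i(\Lambda_1,\Lambda_2)=\sup_{\beta>0}\ \Lambda_i\log(1+\beta)\,e^{-(\Lambda_1+\Lambda_2)\beta^{2/\alpha}} . \] Then this game has a unique Nash equilibrium $(\Lambda_1^*,\Lambda_2^* )$; it is given by $\Lambda_1^*=N_1$ and $\Lambda_2^*=\min(x,N_2)$, where $x$ is the solution of \[ N_1=x\left(\frac{\alpha}{2\left(1+x^{\alpha/2}\right)\log\left(1+x^{-\alpha/2}\right)}-1\right). \]
   Context: A Nash equilibrium is a pair $(\Lambda_1^*,\Lambda_2^* )\in[0,N_1]\times[0,N_2]$ such that $\Lambda_1^*$ maximizes $U_1(\cdot,\Lambda_2^* )$ over $[0,N_1]$ and $\Lambda_2^*$ maximizes $U_2(\Lambda_1^*,\cdot)$ over $[0,N_2]$. Here $N_i$ is the average number of nodes per transmission disc of network $i$, $\Lambda_i$ is its average number of simultaneous transmissions per disc, and $\log$ is the natural logarithm. *)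

From HB Require Import structures.
From mathcomp Require Import all_boot all_order all_algebra.
From mathcomp Require Import all_classical all_reals all_analysis.
Set Implicit Arguments. Unset Strict Implicit. Unset Printing Implicit Defensive.
Import Order.TTheory GRing.Theory Num.Theory.
Local Open Scope classical_set_scope.
Local Open Scope ring_scope.

(* Payoff of a player with own transmission intensity [Li] when the total
   intensity is [L1 + L2]:
   sup_{beta > 0} Li * log(1+beta) * exp(-(L1+L2) * beta^(2/alpha)).
   (This set is always bounded above: if Li = 0 it is {0}, otherwise
   L1 + L2 > 0.) *)
Definition rag_payoff (R : realType) (alpha Li L1 L2 : R) : R :=
  sup [set y : R | exists2 b : R, 0 < b &
        y = Li * ln (1 + b) * expR (- (L1 + L2) * b `^ (2 / alpha))].

Definition U1 (R : realType) (alpha L1 L2 : R) : R := rag_payoff alpha L1 L1 L2.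
Definition U2 (R : realType) (alpha L1 L2 : R) : R := rag_payoff alpha L2 L1 L2.

Definition nash_eq (R : realType) (alpha N1 N2 L1 L2 : R) : Prop :=
  [/\ 0 <= L1 <= N1, 0 <= L2 <= N2,
      (forall l1, 0 <= l1 <= N1 -> U1 alpha l1 L2 <= U1 alpha L1 L2) &
      (forall l2, 0 <= l2 <= N2 -> U2 alpha L1 l2 <= U2 alpha L1 L2)].

Definition x_eq (R : realType) (alpha N1 x : R) : Prop :=
  N1 = x * (alpha / (2 * (1 + x `^ (alpha / 2)) * ln (1 + x `^ (- (alpha / 2)))) - 1).

From HB Require Import structures.
From mathcomp Require Import all_boot all_order all_algebra.
From mathcomp Require Import all_classical all_reals all_analysis.
From mathcomp Require Import ring lra.
Import Order.TTheory GRing.Theory Num.Theory.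
Import numFieldNormedType.Exports.
Local Open Scope classical_set_scope.
Local Open Scope ring_scope.

(* Substituting [beta = y ^ (- alpha / 2)] and writing [a = alpha / 2], the
   payoff of intensity [l] against an opponent of intensity [c] becomes
   [sup_(y > 0) envelope a c y * xexpNx (l / y)], where
   [envelope a c y = y * ln (1 + y ^ (- a)) * exp (- c / y)] and
   [xexpNx z = z * exp (- z)].  [xexpNx] peaks at [z = 1], and [envelope a c]
   is unimodal with its peak at the unique [y_c] such that
   [crit_load a y_c = c]: its derivative has the sign of [c - crit_load a y],
   and [crit_load a y = y * (a / hfun (y ^ a) - 1)] crosses each positive
   level once because [hfun Y = (1 + Y) ln (1 + 1 / Y)] decreases.  Hence the
   payoff is unimodal in [l] with its maximum at [l = y_c], and the best
   response in [[0, N]] is [min y_c N].  Since [crit_load a y < y] for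
   [a < 2], two uncapped best responses [L1 = y_(L2)], [L2 = y_(L1)] would
   give [L2 < L1 < L2], and [N1 <= N2] excludes [L2 = N2 < L1 < N1]; so every
   equilibrium has [L1 = N1] and [L2 = min y_(N1) N2], i.e. [x = y_(N1)]. *)

Section RealFacts.
Context {R : realType}.
Implicit Types (f : R -> R) (x y : R).

Lemma is_derive_continuous f x (df : R) : is_derive x 1 f df -> {for x, continuous f}.
Proof. by case=> /derivable1_diffP/differentiable_continuous. Qed.

Lemma gtr0_is_derive_lt f (df : R -> R) x1 x2 :
  (forall x, x1 <= x <= x2 -> is_derive x 1 f (df x)) ->
  (forall x, x1 < x < x2 -> 0 < df x) -> x1 < x2 -> f x1 < f x2.
Proof.
move=> fD df_gt0 x12.
have fD' x : x \in `]x1, x2[ -> is_derive x 1 f (df x).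
  by rewrite in_itv /= => /andP[? ?]; apply: fD; lra.
have fC : {within `[x1, x2], continuous f}.
  apply: continuous_in_subspaceT => x; rewrite inE /= in_itv /=.
  by move/fD/is_derive_continuous.
have [c] := MVT x12 fD' fC; rewrite in_itv /= => c12 fE.
by rewrite -subr_gt0 fE mulr_gt0 ?df_gt0 ?subr_gt0.
Qed.

Lemma ltr0_is_derive_gt f (df : R -> R) x1 x2 :
  (forall x, x1 <= x <= x2 -> is_derive x 1 f (df x)) ->
  (forall x, x1 < x < x2 -> df x < 0) -> x1 < x2 -> f x2 < f x1.
Proof.
move=> fD df_lt0 x12; rewrite -ltrN2.
apply: (@gtr0_is_derive_lt (fun x => - f x) (fun x => - df x)) => // x.
  by move/fD/is_deriveN.
by move/df_lt0; rewrite oppr_gt0.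
Qed.

Lemma ln1Dx_lt x : -1 < x -> x != 0 -> ln (1 + x) < x.
Proof.
move=> x_gtN1 x_neq0.
have : ln (1 + x) != 0 by rewrite ln_eq0; [rewrite addrC -subr_eq0 addrK | lra].
move/expR_gt1Dx; rewrite lnK ?posrE; lra.
Qed.

Lemma ln1Dx_gt x : 0 < x -> x / (1 + x) < ln (1 + x).
Proof.
move=> x_gt0; have x1_gt0 : 0 < 1 + x by lra.
have : ln (1 + - (x / (1 + x))) < - (x / (1 + x)).
  apply: ln1Dx_lt; last by rewrite oppr_eq0 lt0r_neq0 ?divr_gt0.
  by rewrite ltrNl opprK ltr_pdivrMr // mul1r; lra.
have -> : 1 + - (x / (1 + x)) = (1 + x)^-1 by field; lra.
by rewrite lnV ?posrE // ltrN2.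
Qed.

Lemma powRV x r : 0 < x -> x^-1 `^ r = (x `^ r)^-1.
Proof. by move=> x_gt0; rewrite /powR invr_eq0 gt_eqF // lnV ?posrE // mulrN expRN. Qed.

Definition xexpNx x := x * expR (- x).

Lemma xexpNx_ge0 x : 0 <= x -> 0 <= xexpNx x.
Proof. by move=> x_ge0; rewrite mulr_ge0 // ltW // expR_gt0. Qed.

Lemma xexpNx1 : xexpNx 1 = expR (-1).
Proof. by rewrite /xexpNx mul1r. Qed.

Lemma xexpNx_le x : xexpNx x <= expR (-1).
Proof.
have -> : expR (-1) = expR (x - 1) * expR (- x) :> R by rewrite -expRD; congr expR; ring.
by rewrite ler_pM2r ?expR_gt0 //; have := expR_ge1Dx (x - 1); lra.
Qed.

Lemma xexpNx_lt x : x != 1 -> xexpNx x < expR (-1).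
Proof.
move=> x_neq1.
have -> : expR (-1) = expR (x - 1) * expR (- x) :> R by rewrite -expRD; congr expR; ring.
rewrite ltr_pM2r ?expR_gt0 //; have := @expR_gt1Dx R (x - 1).
by rewrite subr_eq0 x_neq1; lra.
Qed.

Lemma xexpNx_le_le1 x y : 0 <= x -> x <= y -> y <= 1 -> xexpNx x <= xexpNx y.
Proof.
move=> x_ge0 xy y_le1; rewrite /xexpNx.
have -> : expR (- y) = expR (x - y) * expR (- x) by rewrite -expRD; congr expR; ring.
have := expR_ge1Dx (x - y); rewrite mulrA ler_pM2r ?expR_gt0 //; nra.
Qed.

Lemma xexpNx_ge_ge1 x y : 1 <= x -> x <= y -> xexpNx y <= xexpNx x.
Proof.
move=> x_ge1 xy; rewrite /xexpNx.
have -> : expR (- x) = expR (y - x) * expR (- y) by rewrite -expRD; congr expR; ring.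
have := expR_ge1Dx (y - x); rewrite mulrA ler_pM2r ?expR_gt0 //; nra.
Qed.

Lemma xexpNx_div_mul l l' y : 0 <= l -> l <= l' -> l' <= y -> 0 < l' ->
  expR (-1) * xexpNx (l / y) <= xexpNx (l / l') * xexpNx (l' / y).
Proof.
move=> l_ge0 ll' l'y l'_gt0; have y_gt0 : 0 < y by lra.
rewrite /xexpNx mulrACA -!expRD mulrCA.
have -> : l / l' * (l' / y) = l / y by field; lra.
apply: ler_wpM2l; first by rewrite divr_ge0 // ltW.
rewrite -expRD ler_expR -subr_ge0.
have -> : - (l / l') - l' / y - (-1 - l / y) = (l' - l) * (y - l') / (l' * y).
  by field; lra.
by rewrite divr_ge0 ?mulr_ge0 //; lra.
Qed.

End RealFacts.

Section Hfun.
Context {R : realType}.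
Implicit Types (Y : R).

Definition hfun Y := (1 + Y) * ln (1 + Y^-1).

Lemma is_derive_inv {Y} : Y != 0 -> is_derive Y 1 (fun y : R => y^-1) (- Y ^- 2).
Proof.
move=> Y_neq0; eapply is_derive_eq; first exact: (is_deriveV (f := id) Y_neq0 (is_derive_id Y 1)).
by rewrite /GRing.scale /= mulr1.
Qed.

Lemma is_derive_hfun {Y} : 0 < Y -> is_derive Y 1 hfun (ln (1 + Y^-1) - Y^-1).
Proof.
move=> Y_gt0; have pos : 0 < 1 + Y^-1 by rewrite addr_gt0 ?invr_gt0.
have D1 := @is_derive_cst _ _ R (1 : R) Y 1.
have DL := is_derive1_comp (is_derive1_ln _)
  (is_deriveD D1 (is_derive_inv (lt0r_neq0 Y_gt0))).
eapply is_derive_eq; first exact: (is_deriveM (is_deriveD D1 (is_derive_id Y 1)) (DL pos)).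
rewrite /GRing.scale /= !fctE /=.
by field; rewrite lt0r_neq0 //=; lra.
Qed.

Lemma hfun_gt1 {Y} : 0 < Y -> 1 < hfun Y.
Proof.
move=> Y_gt0; have := @ln1Dx_gt _ Y^-1; rewrite invr_gt0 /hfun => /(_ Y_gt0).
have -> : Y^-1 / (1 + Y^-1) = (1 + Y)^-1 by field; lra.
by rewrite -ltr_pdivrMl ?mul1r //; lra.
Qed.

Lemma hfun_le {Y} : 0 < Y -> hfun Y <= (1 + Y) / Y.
Proof.
move=> Y_gt0; rewrite /hfun ler_pM2l; last lra.
by apply: le_ln1Dx; rewrite (@lt_le_trans _ _ 0) ?invr_ge0 ?ltW.
Qed.

Lemma hfun_decr {Y1 Y2} : 0 < Y1 -> Y1 < Y2 -> hfun Y2 < hfun Y1.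
Proof.
move=> Y1_gt0; apply: ltr0_is_derive_gt => [Y /andP[Y1Y _]|Y /andP[Y1Y _]].
  by apply: is_derive_hfun; lra.
have Y_gt0 : 0 < Y by lra.
by rewrite subr_lt0 ln1Dx_lt ?invr_eq0 ?lt0r_neq0 // (@lt_le_trans _ _ 0) ?invr_ge0 ?ltW.
Qed.

End Hfun.

Definition rate {R : realType} (a y : R) := ln (1 + (y `^ a)^-1).
Definition crit_slope {R : realType} (a y : R) := a / hfun (y `^ a) - 1.
Definition crit_load {R : realType} (a y : R) := y * crit_slope a y.

Section CritLoad.
Context {R : realType} {a : R} (a_gt0 : 0 < a).
Implicit Types (c y : R).
Local Notation rate := (rate a).
Local Notation crit_slope := (crit_slope a).
Local Notation crit_load := (crit_load a).

Lemma rate_gt0 {y} : 0 < y -> 0 < rate y.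
Proof. by move=> y_gt0; rewrite ln_gt0 // ltrDl invr_gt0 powR_gt0. Qed.

Lemma crit_slope_lt {y} : 0 < y -> crit_slope y < a - 1.
Proof.
move=> y_gt0; have h_gt1 := hfun_gt1 (powR_gt0 a y_gt0).
by rewrite ltrD2r gtr_pMr // invf_lt1 //; lra.
Qed.

Lemma crit_slope_incr {y1 y2} : 0 < y1 -> y1 < y2 -> crit_slope y1 < crit_slope y2.
Proof.
move=> y1_gt0 y12; have Y1_gt0 := powR_gt0 a y1_gt0.
have Y12 : y1 `^ a < y2 `^ a by apply: gt0_ltr_powR => //; rewrite nnegrE; lra.
have := hfun_gt1 Y1_gt0; have := hfun_gt1 (lt_trans Y1_gt0 Y12) => *.
rewrite ltrD2r ltr_pM2l // ltf_pV2 ?posrE ?hfun_decr //; lra.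
Qed.

Lemma crit_load_lt {y} : a < 2 -> 0 < y -> crit_load y < y.
Proof. by move=> a_lt2 y_gt0; rewrite gtr_pMr //; have := crit_slope_lt y_gt0; lra. Qed.

Section Root.
Context {c ys : R} (c_gt0 : 0 < c) (ys_gt0 : 0 < ys) (ys_root : crit_load ys = c).

Lemma crit_slope_root_gt0 : 0 < crit_slope ys.
Proof. by move: c_gt0; rewrite -ys_root pmulr_rgt0. Qed.

Lemma crit_load_lt_root {y} : 0 < y -> y < ys -> crit_load y < c.
Proof.
move=> y_gt0 y_lt; rewrite -ys_root /crit_load.
have := crit_slope_incr y_gt0 y_lt; have := crit_slope_root_gt0.
case: (lerP (crit_slope y) 0) => s_le0 *.
  by rewrite (le_lt_trans (y := 0)) ?mulr_gt0 ?pmulr_rle0.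
by rewrite (lt_trans (y := ys * crit_slope y)) ?ltr_pM2r ?ltr_pM2l.
Qed.

Lemma crit_load_gt_root {y} : ys < y -> c < crit_load y.
Proof.
move=> y_gt; rewrite -ys_root /crit_load.
have := crit_slope_incr ys_gt0 y_gt; have := crit_slope_root_gt0 => *.
by rewrite (lt_trans (y := ys * crit_slope y)) ?ltr_pM2l ?ltr_pM2r //; lra.
Qed.

Lemma crit_load_inj y : 0 < y -> crit_load y = c -> y = ys.
Proof.
move=> y_gt0 y_root; case: (ltgtP y ys) => // [y_lt|y_gt].
  by have := crit_load_lt_root y_gt0 y_lt; lra.
by have := crit_load_gt_root y_gt; lra.
Qed.

End Root.

Lemma crit_load_continuous y : 0 < y -> {for y, continuous crit_load}.
Proof.
move=> y_gt0; have Y_gt0 := powR_gt0 a y_gt0.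
have Dh := is_derive1_comp (g := fun z : R => z `^ a)
  (is_derive_hfun Y_gt0) (is_derive1_powR a y_gt0).
have h_neq0 : hfun (y `^ a) != 0 by rewrite lt0r_neq0 // (lt_trans ltr01) ?hfun_gt1.
have Dinv := is_derive1_comp (g := fun z : R => hfun (z `^ a)) (is_derive_inv h_neq0) Dh.
have Dslope := is_deriveB (is_deriveZ a Dinv) (@is_derive_cst _ _ R (1 : R) y 1).
apply: is_derive_continuous; exact: (is_deriveM (is_derive_id y 1) Dslope).
Qed.

Lemma crit_load_expRN1_lt0 : crit_load (expR (-1)) < 0.
Proof.
rewrite pmulr_rlt0 ?expR_gt0 // subr_lt0 ltr_pdivrMr; last first.
  by rewrite (lt_trans ltr01) ?hfun_gt1 ?powR_gt0 ?expR_gt0.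
rewrite mul1r -expRM mulN1r /hfun -expRN opprK.
have ln_gt : a < ln (1 + expR a).
  by rewrite -[X in X < _]expRK ltr_ln ?posrE ?addr_gt0 ?expR_gt0 // ltrDr.
by rewrite (lt_le_trans ln_gt) // ler_peMl ?ln_ge0 ?lerDl ?expR_ge0 //; lra.
Qed.

Lemma crit_load_gt_lin {y} : 1 <= a -> 1 <= y -> y * (a - 1) - a < crit_load y.
Proof.
move=> a_ge1 y_ge1; have y_gt0 : 0 < y by lra.
have Y_ge : y <= y `^ a by apply: le1r_powR.
set Y := y `^ a in Y_ge *; have Y_gt0 : 0 < Y by lra.
have h_gt0 : 0 < hfun Y by rewrite (lt_trans ltr01) ?hfun_gt1.
have : a * Y / (1 + Y) <= a / hfun Y.
  have -> : a * Y / (1 + Y) = a / ((1 + Y) / Y) by field; lra.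
  by rewrite ler_pM2l // lef_pV2 ?posrE ?hfun_le ?divr_gt0 //; lra.
rewrite /crit_load /crit_slope -/Y => slope_ge.
have : y * (a * Y / (1 + Y) - 1) <= y * (a / hfun Y - 1) by rewrite ler_pM2l // lerD2r.
suff : y * (a - 1) - a < y * (a * Y / (1 + Y) - 1) by lra.
have -> : y * (a * Y / (1 + Y) - 1) = y * (a - 1) - a * (y / (1 + Y)) by field; lra.
by rewrite ltrD2l ltrN2 gtr_pMr // ltr_pdivrMr; lra.
Qed.

Lemma crit_load_root c : 1 < a -> a < 2 -> 0 < c -> exists2 ys, 0 < ys & crit_load ys = c.
Proof.
move=> a_gt1 a_lt2 c_gt0; set yhi := (c + a) / (a - 1) + 1.
have yhi_ge1 : 1 <= yhi by rewrite lerDr divr_ge0 //; lra.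
have yhiE : yhi * (a - 1) = c + a + (a - 1) by rewrite /yhi; field; lra.
have lo := crit_load_expRN1_lt0; have hi := crit_load_gt_lin (ltW a_gt1) yhi_ge1.
have lo_le_hi : expR (-1) <= yhi by rewrite (le_trans _ yhi_ge1) // expR_le1; lra.
have cont : {within `[expR (-1), yhi], continuous crit_load}.
  apply: continuous_in_subspaceT => y; rewrite inE /= in_itv /= => /andP[y_ge _].
  by apply: crit_load_continuous; rewrite (lt_le_trans _ y_ge) ?expR_gt0.
have c_between : Num.min (crit_load (expR (-1))) (crit_load yhi) <= c <=
    Num.max (crit_load (expR (-1))) (crit_load yhi).
  by rewrite ge_min le_max; apply/andP; split; apply/orP; [left|right]; lra.
have [ys] := IVT lo_le_hi cont c_between.
rewrite in_itv /= => /andP[ys_ge _] ys_root; exists ys => //.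
by rewrite (lt_le_trans _ ys_ge) ?expR_gt0.
Qed.

End CritLoad.

Definition envelope {R : realType} (a c y : R) := y * rate a y * expR (- c / y).

Section Envelope.
Context {R : realType} {a c : R} (a_gt0 : 0 < a).
Implicit Types (y : R).
Local Notation envelope := (envelope a c).
Local Notation envelope' :=
  (fun y => expR (- c / y) * (rate a y / y) * (c - crit_load a y)).

Lemma is_derive_rate {y} : 0 < y -> is_derive y 1 (rate a) (- a / (y * (1 + y `^ a))).
Proof.
move=> y_gt0; have Y_gt0 := powR_gt0 a y_gt0.
have pos : 0 < 1 + (y `^ a)^-1 by rewrite addr_gt0 ?invr_gt0.
have Dinv := is_derive1_comp (g := fun z : R => z `^ a)
  (is_derive_inv (lt0r_neq0 Y_gt0)) (is_derive1_powR a y_gt0).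
have Dsum := is_deriveD (@is_derive_cst _ _ R (1 : R) y 1) Dinv.
have Dln := is_derive1_comp (g := fun z : R => 1 + (z `^ a)^-1) (is_derive1_ln pos) Dsum.
eapply is_derive_eq; first exact: Dln.
have -> : y `^ (a - 1) = y `^ a / y.
  by rewrite -(mulr_powRB1 (ltW y_gt0) a_gt0); field; lra.
by rewrite /=; field; rewrite !lt0r_neq0 //=; lra.
Qed.

Lemma envelope_gt0 {y} : 0 < y -> 0 < envelope y.
Proof. by move=> y_gt0; rewrite !mulr_gt0 ?rate_gt0 ?expR_gt0. Qed.

Lemma is_derive_envelope {y} : 0 < y -> is_derive y 1 envelope (envelope' y).
Proof.
move=> y_gt0; have Y_gt0 := powR_gt0 a y_gt0.
have Dexp := is_derive1_comp (g := fun z : R => - c / z) (is_derive_expR _)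
  (is_deriveZ (- c) (is_derive_inv (lt0r_neq0 y_gt0))).
eapply is_derive_eq.
  exact: is_deriveM (is_deriveM (is_derive_id y 1) (is_derive_rate y_gt0)) Dexp.
have rate_neq0 := lt0r_neq0 (rate_gt0 y_gt0).
rewrite /GRing.scale /= !fctE /crit_load /crit_slope /hfun -/(rate a y).
by field; rewrite rate_neq0 !lt0r_neq0 //=; lra.
Qed.

Context {ys : R} (c_gt0 : 0 < c) (ys_gt0 : 0 < ys) (ys_root : crit_load a ys = c).

Lemma envelope_incr {y1 y2} : 0 < y1 -> y1 < y2 -> y2 <= ys -> envelope y1 < envelope y2.
Proof.
move=> y1_gt0 y12 y2_le.
apply: (@gtr0_is_derive_lt _ _ envelope') y12 => [y /andP[y1y _]|y /andP[y1y yy2]].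
  by apply: is_derive_envelope; lra.
have y_gt0 : 0 < y by lra.
have load_lt : crit_load a y < c.
  by apply: (crit_load_lt_root a_gt0 c_gt0 ys_gt0 ys_root y_gt0); lra.
by rewrite !mulr_gt0 ?expR_gt0 ?invr_gt0 ?rate_gt0 // subr_gt0.
Qed.

Lemma envelope_decr {y1 y2} : ys <= y1 -> y1 < y2 -> envelope y2 < envelope y1.
Proof.
move=> y1_ge y12; have y_gt0 y : y1 <= y -> 0 < y.
  by move=> ?; rewrite (lt_le_trans ys_gt0) //; lra.
apply: (@ltr0_is_derive_gt _ _ envelope') y12 => [y /andP[/y_gt0 ? _]|y /andP[y1y _]].
  exact: is_derive_envelope.
have load_gt : c < crit_load a y by apply: (crit_load_gt_root a_gt0 c_gt0 ys_gt0 ys_root); lra.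
by rewrite pmulr_rlt0 ?mulr_gt0 ?expR_gt0 ?invr_gt0 ?rate_gt0 ?y_gt0 ?ltW // subr_lt0.
Qed.

Lemma envelope_le_root {y} : 0 < y -> envelope y <= envelope ys.
Proof.
move=> y_gt0; case: (ltgtP y ys) => [y_lt|y_gt|->] //.
  exact/ltW/envelope_incr.
exact/ltW/envelope_decr.
Qed.

End Envelope.

Definition payoff_term {R : realType} (a l T y : R) := l * rate a y * expR (- T / y).

Lemma payoff_term_split {R : realType} (a c l y : R) : 0 < y ->
  payoff_term a l (c + l) y = envelope a c y * xexpNx (l / y).
Proof.
move=> y_gt0; rewrite /payoff_term /envelope /xexpNx.
have -> : - (c + l) / y = - c / y + - (l / y) by field; lra.
by rewrite expRD; field; lra.
Qed.

(* The substitution [beta = y ^ (- alpha / 2)] maps [0 < y] onto [0 < beta]. *)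
Lemma rag_payoff_setE {R : realType} (alpha l L1 L2 : R) : 0 < alpha ->
  [set v : R | exists2 b : R, 0 < b &
     v = l * ln (1 + b) * expR (- (L1 + L2) * b `^ (2 / alpha))] =
  payoff_term (alpha / 2) l (L1 + L2) @` [set y | 0 < y].
Proof.
move=> alpha_gt0; have inv_exp : 2 / alpha * (alpha / 2) = 1 by field; lra.
apply/seteqP; split => v /=; first case=> y y_gt0 ->.
  have Y_gt0 : 0 < y `^ (2 / alpha) by rewrite powR_gt0.
  exists (y `^ (2 / alpha))^-1; first by rewrite invr_gt0.
  by rewrite /payoff_term /rate powRV // -powRrM inv_exp powRr1 ?ltW // !invrK.
case=> y y_gt0 <-; have Y_gt0 : 0 < y `^ (alpha / 2) by rewrite powR_gt0.
exists (y `^ (alpha / 2))^-1; first by rewrite invr_gt0.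
by rewrite /payoff_term /rate powRV // -powRrM [alpha / 2 * _]mulrC inv_exp powRr1 ?ltW.
Qed.

Section RagPayoff.
Context {R : realType} {alpha l L1 L2 : R} (alpha_gt0 : 0 < alpha).
Local Notation term := (payoff_term (alpha / 2) l (L1 + L2)).

Lemma rag_payoff_le (B : R) :
  (forall y, 0 < y -> term y <= B) -> rag_payoff alpha l L1 L2 <= B.
Proof.
move=> term_le; rewrite /rag_payoff rag_payoff_setE //.
apply: ge_sup; first by exists (term 1), 1 => //=; rewrite ltr01.
by move=> _ [y y_gt0 <-]; exact: term_le.
Qed.

Lemma payoff_term_le_rag_payoff (B : R) :
  (forall y, 0 < y -> term y <= B) -> forall y, 0 < y -> term y <= rag_payoff alpha l L1 L2.
Proof.
move=> term_le y y_gt0; rewrite /rag_payoff rag_payoff_setE //.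
apply: ub_le_sup; last by exists y.
by exists B => _ [z z_gt0 <-]; exact: term_le.
Qed.

End RagPayoff.

Definition response_payoff {R : realType} (alpha c l : R) := rag_payoff alpha l c l.

Section BestResponse.
Context {R : realType} {alpha c ys : R} (alpha_gt0 : 0 < alpha) (c_gt0 : 0 < c)
  (ys_gt0 : 0 < ys) (ys_root : crit_load (alpha / 2) ys = c).
Local Notation K := (envelope (alpha / 2) c).
Local Notation payoff := (response_payoff alpha c).
Let a_gt0 : 0 < alpha / 2. Proof. by rewrite divr_gt0. Qed.

Lemma envelope_xexpNx_le_mul {y z B C} : 0 < y -> 0 <= z ->
  K y <= B -> xexpNx z <= C -> K y * xexpNx z <= B * C.
Proof. by move=> y_gt0 z_ge0; apply: ler_pM; rewrite ?xexpNx_ge0 // ltW ?envelope_gt0. Qed.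

Let K_le_root {y} := envelope_le_root a_gt0 c_gt0 ys_gt0 ys_root (y := y).

Lemma payoff_term_le_peak {l y} : 0 <= l -> 0 < y ->
  payoff_term (alpha / 2) l (c + l) y <= K ys * expR (-1).
Proof.
move=> l_ge0 y_gt0; rewrite payoff_term_split //.
by apply: envelope_xexpNx_le_mul; rewrite ?K_le_root ?xexpNx_le ?divr_ge0 // ltW.
Qed.

Lemma response_payoff_le_peak {l} : 0 <= l -> payoff l <= K ys * expR (-1).
Proof. by move=> l_ge0; apply: rag_payoff_le => // y; apply: payoff_term_le_peak. Qed.

Lemma payoff_term_le_response_payoff {l y} : 0 <= l -> 0 < y ->
  payoff_term (alpha / 2) l (c + l) y <= payoff l.
Proof.
move=> l_ge0; apply: (payoff_term_le_rag_payoff alpha_gt0 (K ys * expR (-1))) => z.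
exact: payoff_term_le_peak.
Qed.

Lemma envelope_le_response_payoff {y} : 0 < y -> K y * expR (-1) <= payoff y.
Proof.
move=> y_gt0; have -> : K y * expR (-1) = payoff_term (alpha / 2) y (c + y) y.
  by rewrite payoff_term_split // divff ?lt0r_neq0 // xexpNx1.
exact: payoff_term_le_response_payoff (ltW y_gt0) y_gt0.
Qed.

Lemma response_payoff_root : payoff ys = K ys * expR (-1).
Proof.
apply/eqP; rewrite eq_le response_payoff_le_peak ?envelope_le_response_payoff //.
exact: ltW.
Qed.

(* The supremum defining a payoff is not known to be attained, so strict
   comparisons of payoffs go through a uniform gap below the peak. *)
Lemma envelope_xexpNx_gap_gt_root {l} : ys < l -> exists2 M, M < K ys * expR (-1) &
  forall y, 0 < y -> K y * xexpNx (l / y) <= M.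
Proof.
move=> ys_lt; set y1 := (ys + l) / 2.
have [y1_gt y1_lt] : ys < y1 /\ y1 < l by rewrite /y1; split; lra.
have y1_gt0 := lt_trans ys_gt0 y1_gt.
have K_decr := @envelope_decr _ _ _ a_gt0 _ c_gt0 ys_gt0 ys_root.
exists (Num.max (K ys * xexpNx (l / y1)) (K y1 * expR (-1))).
  rewrite gt_max ltr_pM2l ?ltr_pM2r ?expR_gt0 ?envelope_gt0 ?K_decr //=.
  by rewrite xexpNx_lt // gt_eqF // ltr_pdivlMr // mul1r; lra.
move=> y y_gt0; rewrite le_max; apply/orP.
case: (lerP y y1) => [y_le|y_gt]; [left|right].
  apply: envelope_xexpNx_le_mul => //; first by rewrite divr_ge0 //; lra.
    exact: K_le_root.
  apply: xexpNx_ge_ge1; first by rewrite ler_pdivlMr // mul1r; lra.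
  by apply: ler_wpM2l; [lra | rewrite lef_pV2 ?posrE //; lra].
apply: envelope_xexpNx_le_mul => //; first by rewrite divr_ge0 //; lra.
  exact: ltW (K_decr _ _ (ltW y1_gt) y_gt).
exact: xexpNx_le.
Qed.

Lemma response_payoff_gt_root {l} : ys < l -> payoff l < payoff ys.
Proof.
move=> ys_lt; have [M M_lt M_ub] := envelope_xexpNx_gap_gt_root ys_lt.
rewrite response_payoff_root (le_lt_trans _ M_lt) //.
by apply: rag_payoff_le => // y y_gt0; rewrite payoff_term_split // M_ub.
Qed.

Lemma envelope_xexpNx_gap_lt {l l'} : 0 <= l -> l < l' -> l' <= ys ->
  exists2 M, M < K l' * expR (-1) &
  forall y, 0 < y -> y < l' -> K y * xexpNx (l / y) <= M.
Proof.
move=> l_ge0 ll' l'_le; set y1 := (l + l') / 2.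
have [y1_gt y1_lt] : l < y1 /\ y1 < l' by rewrite /y1; split; lra.
have y1_gt0 : 0 < y1 by lra.
have K_incr := @envelope_incr _ _ _ a_gt0 _ c_gt0 ys_gt0 ys_root.
exists (Num.max (K l' * xexpNx (l / y1)) (K y1 * expR (-1))).
  rewrite gt_max ltr_pM2l ?ltr_pM2r ?expR_gt0 ?envelope_gt0 ?K_incr //=; try lra.
  by rewrite xexpNx_lt // lt_eqF // ltr_pdivrMr // mul1r.
move=> y y_gt0 y_lt; rewrite le_max; apply/orP.
case: (lerP y1 y) => [y_ge|y_lt1]; [left|right].
  apply: envelope_xexpNx_le_mul => //; first by rewrite divr_ge0 //; lra.
    exact: ltW (K_incr _ _ y_gt0 y_lt l'_le).
  apply: xexpNx_le_le1; first by rewrite divr_ge0 //; lra.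
    by apply: ler_wpM2l => //; rewrite lef_pV2 ?posrE //; lra.
  by rewrite ler_pdivrMr // mul1r; lra.
apply: envelope_xexpNx_le_mul => //; first by rewrite divr_ge0 //; lra.
  exact: ltW (K_incr _ _ y_gt0 y_lt1 (ltW (lt_le_trans y1_lt l'_le))).
exact: xexpNx_le.
Qed.

(* Beyond [l'], the ratio of the terms of [l] and [l'] is at most [th < 1]. *)
Lemma response_payoff_incr {l l'} : 0 <= l -> l < l' -> l' <= ys -> payoff l < payoff l'.
Proof.
move=> l_ge0 ll' l'_le; have l'_gt0 : 0 < l' by lra.
have [M M_lt M_ub] := envelope_xexpNx_gap_lt l_ge0 ll' l'_le.
have peak_le := envelope_le_response_payoff l'_gt0.
have payoff_gt0 : 0 < payoff l'.
  by rewrite (lt_le_trans _ peak_le) // mulr_gt0 ?expR_gt0 // envelope_gt0.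
set th := xexpNx (l / l') / expR (-1).
have th_lt1 : th < 1.
  by rewrite ltr_pdivrMr ?expR_gt0 // mul1r xexpNx_lt // lt_eqF // ltr_pdivrMr // mul1r.
apply: (@le_lt_trans _ _ (Num.max M (th * payoff l'))); last first.
  by rewrite gt_max (lt_le_trans M_lt) // gtr_pMl.
apply: rag_payoff_le => // y y_gt0; rewrite payoff_term_split // le_max.
case: (ltP y l') => [y_lt|y_ge]; apply/orP; [left; exact: M_ub | right].
have th_ge0 : 0 <= th by rewrite divr_ge0 ?xexpNx_ge0 ?divr_ge0 ?expR_ge0 //; lra.
apply: le_trans (ler_wpM2l th_ge0 (payoff_term_le_response_payoff (ltW l'_gt0) y_gt0)).
rewrite payoff_term_split // [th * _]mulrCA.
apply: ler_wpM2l; first exact/ltW/envelope_gt0.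
rewrite /th mulrAC ler_pdivlMr ?expR_gt0 // mulrC.
by apply: xexpNx_div_mul => //; exact: ltW.
Qed.

Lemma best_response_lt {N l} : 0 <= l -> l <= N -> l != Num.min ys N ->
  payoff l < payoff (Num.min ys N).
Proof.
move=> l_ge0 l_le; have [ys_le|N_lt] := leP ys N => l_neq.
  case: (ltgtP l ys) l_neq => [l_lt|l_gt|->]; rewrite ?eqxx //.
    by move=> _; exact: response_payoff_incr.
  by move=> _; exact: response_payoff_gt_root.
by apply: response_payoff_incr; rewrite ?lt_neqAle ?l_neq // ltW.
Qed.

Lemma best_responseP {N l} : 0 <= l <= N ->
  (forall l', 0 <= l' <= N -> payoff l' <= payoff l) <-> l = Num.min ys N.
Proof.
move=> /andP[l_ge0 l_le]; split => [best|-> l' /andP[l'_ge0 l'_le]].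
  apply/eqP/negPn/negP => l_neq; have := best_response_lt l_ge0 l_le l_neq.
  rewrite ltNge best // le_min ge_min lexx orbT (le_trans l_ge0 l_le) andbT.
  by rewrite ltW.
have [->|l'_neq] := eqVneq l' (Num.min ys N); first exact: lexx.
exact/ltW/best_response_lt.
Qed.

End BestResponse.

Lemma U1_response_payoff {R : realType} (alpha l c : R) :
  U1 alpha l c = response_payoff alpha c l.
Proof. by rewrite /U1 /response_payoff /rag_payoff addrC. Qed.

Lemma rag_payoff0 {R : realType} (alpha L1 L2 : R) : 0 < alpha ->
  rag_payoff alpha 0 L1 L2 <= 0.
Proof. by move=> alpha_gt0; apply: rag_payoff_le => // y _; rewrite /payoff_term !mul0r. Qed.

Section Equilibrium.
Context {R : realType} {alpha N1 N2 : R} (alpha_gt2 : 2 < alpha) (alpha_lt4 : alpha < 4)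
  (N1_gt0 : 0 < N1) (N1_le_N2 : N1 <= N2).
Local Notation a := (alpha / 2).

Let alpha_gt0 : 0 < alpha. Proof. by have := alpha_gt2; lra. Qed.
Let a_gt0 : 0 < a. Proof. by have := alpha_gt2; lra. Qed.
Let a_gt1 : 1 < a. Proof. by have := alpha_gt2; lra. Qed.
Let a_lt2 : a < 2. Proof. by have := alpha_lt4; lra. Qed.

Lemma crit_load_root_alpha {c} : 0 < c -> exists2 ys, 0 < ys & crit_load a ys = c.
Proof. exact: crit_load_root a_gt0 c a_gt1 a_lt2. Qed.

Lemma rag_payoff_gt0 {l L1 L2} : 0 < l -> 0 < L1 + L2 -> 0 < rag_payoff alpha l L1 L2.
Proof.
move=> l_gt0 T_gt0; set c := (L1 + L2) / 2; have c_gt0 : 0 < c by rewrite divr_gt0.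
have [ys ys_gt0 ys_root] := crit_load_root_alpha c_gt0.
have term_le y : 0 < y ->
    payoff_term a l (L1 + L2) y <= l / c * (envelope a c ys * expR (-1)).
  move=> y_gt0; have -> : payoff_term a l (L1 + L2) y = l / c * payoff_term a c (c + c) y.
    have -> : c + c = L1 + L2 by rewrite /c; field.
    by rewrite /payoff_term; field; lra.
  apply: ler_wpM2l; first by rewrite divr_ge0 // ltW.
  exact (payoff_term_le_peak alpha_gt0 c_gt0 ys_gt0 ys_root (ltW c_gt0) y_gt0).
apply: lt_le_trans (payoff_term_le_rag_payoff alpha_gt0 _ term_le 1 ltr01).
by rewrite /payoff_term !mulr_gt0 ?rate_gt0 ?expR_gt0.
Qed.

Lemma nash_eq_gt0 {L1 L2} : nash_eq alpha N1 N2 L1 L2 -> 0 < L1 /\ 0 < L2.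
Proof.
case=> /andP[L1_ge0 L1_le] /andP[L2_ge0 L2_le] br1 br2.
have N2_gt0 := lt_le_trans N1_gt0 N1_le_N2.
rewrite !lt_neqAle L1_ge0 L2_ge0 !andbT; split; apply/eqP => L_eq0.
  have := br1 N1; rewrite -L_eq0 /U1 lexx ltW // => /(_ isT); apply/negP.
  rewrite -ltNge (le_lt_trans (rag_payoff0 _ _ _ alpha_gt0)) //.
  by rewrite rag_payoff_gt0 // ltr_wpDr.
have := br2 N2; rewrite -L_eq0 /U2 lexx ltW // => /(_ isT); apply/negP.
rewrite -ltNge (le_lt_trans (rag_payoff0 _ _ _ alpha_gt0)) //.
by rewrite rag_payoff_gt0 // ltr_wpDl.
Qed.

Lemma capped_mutual_response {L1 L2 ys1 ys2} : 0 < ys1 -> 0 < ys2 ->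
  crit_load a ys1 = L2 -> crit_load a ys2 = L1 ->
  L1 = Num.min ys1 N1 -> L2 = Num.min ys2 N2 -> L1 = N1.
Proof.
move=> ys1_gt0 ys2_gt0 ys1_root ys2_root; have [ys1_le|//] := leP ys1 N1 => L1E.
have L2_lt : L2 < L1 by rewrite -ys1_root L1E crit_load_lt.
have [ys2_le|N2_lt] := leP ys2 N2 => L2E.
  by have := crit_load_lt a_gt0 a_lt2 ys2_gt0; rewrite ys2_root -L2E; lra.
by have := N1_le_N2; rewrite -L2E; lra.
Qed.

Lemma nash_eq_unique {x L1 L2} : 0 < x -> crit_load a x = N1 ->
  nash_eq alpha N1 N2 L1 L2 -> L1 = N1 /\ L2 = Num.min x N2.
Proof.
move=> x_gt0 x_root NE; have [L1_gt0 L2_gt0] := nash_eq_gt0 NE.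
case: NE => L1_in L2_in br1 br2.
have [ys1 ys1_gt0 ys1_root] := crit_load_root_alpha L2_gt0.
have [ys2 ys2_gt0 ys2_root] := crit_load_root_alpha L1_gt0.
have L1E : L1 = Num.min ys1 N1.
  apply/(best_responseP alpha_gt0 L2_gt0 ys1_gt0 ys1_root L1_in) => l l_in.
  by rewrite -!U1_response_payoff br1.
have L2E : L2 = Num.min ys2 N2.
  by apply/(best_responseP alpha_gt0 L1_gt0 ys2_gt0 ys2_root L2_in) => l /br2.
have L1_N1 := capped_mutual_response ys1_gt0 ys2_gt0 ys1_root ys2_root L1E L2E.
split => //; rewrite L2E (crit_load_inj a_gt0 N1_gt0 x_gt0 x_root ys2) //.
by rewrite ys2_root.
Qed.

Lemma nash_eq_at {x} : 0 < x -> crit_load a x = N1 -> nash_eq alpha N1 N2 N1 (Num.min x N2).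
Proof.
move=> x_gt0 x_root; have N1_lt_x : N1 < x by rewrite -x_root crit_load_lt.
have c_ge : N1 <= Num.min x N2 by rewrite le_min (ltW N1_lt_x) N1_le_N2.
have c_gt0 := lt_le_trans N1_gt0 c_ge.
have N1_in : 0 <= N1 <= N1 by rewrite lexx ltW.
have c_in : 0 <= Num.min x N2 <= N2 by rewrite ltW //= ge_min lexx orbT.
have [ys1 ys1_gt0 ys1_root] := crit_load_root_alpha c_gt0.
have N1_le_ys1 : N1 <= ys1.
  rewrite leNgt; apply/negP => ys1_lt.
  by have := crit_load_lt a_gt0 a_lt2 ys1_gt0; rewrite ys1_root; lra.
split => // [l1 l1_in|l2 l2_in]; last first.
  by apply: (best_responseP alpha_gt0 N1_gt0 x_gt0 x_root c_in).2.
rewrite !U1_response_payoff.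
by apply: (best_responseP alpha_gt0 c_gt0 ys1_gt0 ys1_root N1_in).2; rewrite ?min_r.
Qed.

End Equilibrium.

Lemma x_eq_crit_load {R : realType} (alpha N1 x : R) : 0 < x ->
  x_eq alpha N1 x <-> crit_load (alpha / 2) x = N1.
Proof.
move=> x_gt0; have Y_gt0 : 0 < x `^ (alpha / 2) by rewrite powR_gt0.
have L_gt0 : 0 < ln (1 + (x `^ (alpha / 2))^-1) by rewrite ln_gt0 // ltrDl invr_gt0.
rewrite /x_eq /crit_load /crit_slope /hfun powRN.
have -> : alpha / 2 / ((1 + x `^ (alpha / 2)) * ln (1 + (x `^ (alpha / 2))^-1)) =
    alpha / (2 * (1 + x `^ (alpha / 2)) * ln (1 + (x `^ (alpha / 2))^-1)).
  by field; lra.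
by split => ->.
Qed.

Theorem theorem2 (R : realType) (alpha N1 N2 : R) :
  2 < alpha -> alpha < 4 -> 0 < N1 -> N1 <= N2 ->
  exists x : R,
    [/\ 0 < x, x_eq alpha N1 x,
        (forall y : R, 0 < y -> x_eq alpha N1 y -> y = x) &
        (forall L1 L2 : R,
            nash_eq alpha N1 N2 L1 L2 <-> (L1 = N1 /\ L2 = Num.min x N2))].
Proof.
move=> alpha_gt2 alpha_lt4 N1_gt0 N1_le_N2.
have a_gt0 : 0 < alpha / 2 by lra.
have [x x_gt0 x_root] := crit_load_root_alpha alpha_gt2 alpha_lt4 N1_gt0.
exists x; split => //.
- exact/(x_eq_crit_load _ _ _ x_gt0).
- move=> y y_gt0 /(x_eq_crit_load _ _ _ y_gt0) y_root.
  exact: (crit_load_inj a_gt0 N1_gt0 x_gt0 x_root).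
- move=> L1 L2; split; first exact: nash_eq_unique.
  by case=> -> ->; exact: nash_eq_at.
Qed.
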